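(* Let $\alpha\in(0,1)\cup(1,\infty)$, $\beta=\alpha/(\alpha-1)$, and consider the $\alpha$-loss $\ell_\alpha(\mathrm{h},(x,y))=\beta\big(1-\mathrm{h}(y|x)^{1/\beta}\big)$, with score $L(\mathrm{q},y)=\beta(1-\mathrm{q}(y)^{1/\beta})$. Then, for $\mathbf{a},\mathbf{b}\in\mathbb{R}^m$, the problem $\mathscr{P}_{\ell_\alpha}^{\mathbf{a},\mathbf{b}}$ is equivalent to $$\mathscr{P}_{\alpha}^{\mathbf{a},\mathbf{b}}:\ \min_{\boldsymbol{\mu},\boldsymbol{\eta},\nu}\ \tfrac{1}{2}(\mathbf{b}-\mathbf{a})^{\mathrm{T}}\boldsymbol{\eta}-\tfrac{1}{2}(\mathbf{b}+\mathbf{a})^{\mathrm{T}}\boldsymbol{\mu}-\nu\ \text{ s.t. }\sum_{y\in\mathcal{Y}}\Big(\frac{\Phi(x,y)^{\mathrm{T}}\boldsymbol{\mu}+\nu}{\beta}+1\Big)_+^{\beta}\leq 1\ \forall x\in\mathcal{X},\ \boldsymbol{\eta}+\boldsymbol{\mu}\succeq\mathbf{0},\ \boldsymbol{\eta}-\boldsymbol{\mu}\succeq\mathbf{0}.$$ In addition, for a solution $\boldsymbol{\mu}^*,\boldsymbol{\eta}^*,\nu^*$ of $\mathscr{P}_{\alpha}^{\mathbf{a},\mathbf{b}}$, the condition $\ell_\alpha(\mathrm{h},(x,y))+\Phi(x,y)^{\mathrm{T}}\boldsymbol{\mu}^*+\nu^*\leq 0$ for all $x\in\mathcal{X},y\in\mathcal{Y}$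 (which makes $\mathrm{h}$ an $\ell_\alpha$-MRC for $\mathcal{U}^{\mathbf{a},\mathbf{b}}$) becomes $$\mathrm{h}(y|x)\geq \Big(\frac{\Phi(x,y)^{\mathrm{T}}\boldsymbol{\mu}^*+\nu^*}{\beta}+1\Big)_+^{\beta}\quad\forall x\in\mathcal{X},y\in\mathcal{Y}.$$
   Context: Let $\mathcal{X},\mathcal{Y}$ be finite nonempty sets, $\mathcal{Y}=\{1,\dots,|\mathcal{Y}|\}$; $\Delta(\mathcal{Y})$ is the set of probability distributions on $\mathcal{Y}$. A classification rule $\mathrm{h}$ assigns to each $x$ a distribution $\mathrm{h}(\cdot|x)\in\Delta(\mathcal{Y})$. For a score function $L$ with loss $\ell(\mathrm{h},(x,y))=L(\mathrm{h}(\cdot|x),y)$: $\Phi:\mathcal{X}\times\mathcal{Y}\to\mathbb{R}^m$ is a feature mapping, $\boldsymbol{\Phi}(x,\cdot)$ is the $|\mathcal{Y}|\times m$ matrix with rows $\Phi(x,y)^{\mathrm{T}}$, $\mathbf{1}$ the all-ones vector, $\preceq,\succeq$ componentwise, $\mathcal{L}=\{\mathbf{c}\in\mathbb{R}^{|\mathcal{Y}|}:\exists\,\mathrm{q}\in\Delta(\mathcal{Y}),\ \mathbf{c}+(L(\mathrm{q},y))_y\preceq\mathbf{0}\}$, and $\mathscr{P}_{\ell}^{\mathbf{a},\mathbf{b}}$ is $\min_{\boldsymbol{\mu},\boldsymbol{\eta},\nu}\tfrac12(\mathbf{b}-\mathbf{a})^{\mathrm{T}}\boldsymbol{\eta}-\tfrac12(\mathbf{b}+\mathbf{a})^{\mathrm{T}}\boldsymbol{\mu}-\nu$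 s.t. $\boldsymbol{\Phi}(x,\cdot)\boldsymbol{\mu}+\nu\mathbf{1}\in\mathcal{L}$ $\forall x$, $\boldsymbol{\eta}\pm\boldsymbol{\mu}\succeq\mathbf{0}$. $\mathcal{U}^{\mathbf{a},\mathbf{b}}=\{\mathrm{p}\in\Delta(\mathcal{X}\times\mathcal{Y}):\mathbf{a}\preceq\mathbb{E}_{\mathrm{p}}\{\Phi\}\preceq\mathbf{b}\}$; an $\ell$-MRC for $\mathcal{U}$ minimizes $\max_{\mathrm{p}\in\mathcal{U}}\sum_{x,y}\mathrm{p}(x,y)\ell(\mathrm{h},(x,y))$ over all classification rules. In expressions $(\cdot)_+^\beta$ the positive part is taken before the power. *)

From HB Require Import structures.
From mathcomp Require Import all_boot all_order all_algebra.
From mathcomp Require Import all_classical all_reals all_analysis.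
Set Implicit Arguments. Unset Strict Implicit. Unset Printing Implicit Defensive.
Import Order.TTheory GRing.Theory Num.Theory.
Local Open Scope ring_scope.

Section MRC.
Variables (R : realType) (X Y : finType) (m : nat).

Definition dotv (u v : 'cV[R]_m) : R := \sum_(i < m) u i 0 * v i 0.

Definition is_distr (q : Y -> R) : Prop :=
  (forall y, 0 <= q y) /\ \sum_(y : Y) q y = 1.

Definition is_rule (h : X -> Y -> R) : Prop := forall x, is_distr (h x).

(* (t)_+^p as an extended real: positive part taken first, then the power,
   with 0^p = 0 for p > 0 and 0^p = +oo for p < 0 (and 0^0 = 1). *)
Definition pospow (t p : R) : \bar R :=
  if 0 < t then (t `^ p)%:E
  else if 0 < p then 0%E else if p == 0 then 1%E else +oo%E.

Definition in_Lset (L : (Y -> R) -> Y -> \bar R) (c : Y -> R) : Prop :=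
  exists q, is_distr q /\ forall y, ((c y)%:E + L q y <= 0)%E.

Definition mrc_obj (a b mu eta : 'cV[R]_m) (nu : R) : R :=
  2^-1 * dotv (b - a) eta - 2^-1 * dotv (b + a) mu - nu.

Definition box_constr (mu eta : 'cV[R]_m) : Prop :=
  forall i, 0 <= eta i 0 + mu i 0 /\ 0 <= eta i 0 - mu i 0.

Definition feas_ell (L : (Y -> R) -> Y -> \bar R) (Phi : X -> Y -> 'cV[R]_m)
  (mu eta : 'cV[R]_m) (nu : R) : Prop :=
  (forall x, in_Lset L (fun y => dotv (Phi x y) mu + nu)) /\ box_constr mu eta.

Definition beta_of (alpha : R) : R := alpha / (alpha - 1).

Definition alpha_score (alpha : R) (q : Y -> R) (y : Y) : \bar R :=
  ((beta_of alpha)%:E * (1 - pospow (q y) (beta_of alpha)^-1))%E.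

Definition alpha_loss (alpha : R) (h : X -> Y -> R) (x : X) (y : Y) : \bar R :=
  alpha_score alpha (h x) y.

Definition feas_alpha (alpha : R) (Phi : X -> Y -> 'cV[R]_m)
  (mu eta : 'cV[R]_m) (nu : R) : Prop :=
  (forall x, (\sum_(y : Y)
      pospow ((dotv (Phi x y) mu + nu) / beta_of alpha + 1) (beta_of alpha)
      <= 1)%E) /\ box_constr mu eta.

Definition is_solution (feas : 'cV[R]_m -> 'cV[R]_m -> R -> Prop)
  (a b : 'cV[R]_m) (mu eta : 'cV[R]_m) (nu : R) : Prop :=
  feas mu eta nu /\
  forall mu' eta' nu', feas mu' eta' nu' ->
    mrc_obj a b mu eta nu <= mrc_obj a b mu' eta' nu'.

End MRC.

From HB Require Import structures.
From mathcomp Require Import all_boot all_order all_algebra.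
From mathcomp Require Import all_classical all_reals all_analysis.
From mathcomp Require Import ring.
Set Implicit Arguments.
Unset Strict Implicit.
Unset Printing Implicit Defensive.
Import Order.TTheory GRing.Theory Num.Theory.
Local Open Scope ring_scope.

(* For beta != 0 and v >= 0, the score constraint c + beta (1 - v^(1/beta)) <= 0
   is equivalent to ((c/beta + 1)_+)^beta <= v: the map v |-> v^(1/beta) is an
   increasing bijection of [0, oo) when beta > 0 and a decreasing one onto
   (0, oo] (with 0 |-> +oo) when beta < 0.  Hence c lies in the set L of the
   alpha-score iff some distribution q dominates the vector
   ((c/beta + 1)_+)^beta, which happens iff that vector has total mass at most
   1 (put the missing mass on a single label).  The same pointwise equivalence,
   with v = h(y|x), turns the MRC condition into the lower bound on h. *)

Section PosPow.
Variable R : realType.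
Implicit Types p r s t v : R.

Lemma gt0_ler_powR2 s : 0 < s ->
  {in Num.nneg &, {mono (@powR R)^~ s : x y / x <= y}}.
Proof. by move=> s_gt0; apply: le_mono_in; exact: gt0_ltr_powR. Qed.

Lemma lt0_ltr_powR r : r < 0 ->
  {in Num.pos &, {homo (@powR R)^~ r : x y /~ x < y}}.
Proof.
move=> r_lt0 x y x_gt0 y_gt0 lt_xy.
rewrite -[r]opprK (powRN x) (powRN y) ltf_pV2 ?posrE ?powR_gt0 //.
by apply: gt0_ltr_powR; rewrite ?oppr_gt0 ?nnegrE ?ltW.
Qed.

Lemma lt0_ler_powR2 r : r < 0 ->
  {in Num.pos &, {mono (@powR R)^~ r : x y /~ x <= y}}.
Proof. by move=> r_lt0; apply: le_nmono_in; exact: lt0_ltr_powR. Qed.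

Lemma powRVK s t : s != 0 -> 0 <= t -> (t `^ s^-1) `^ s = t.
Proof. by move=> s_neq0 t_ge0; rewrite -powRrM mulVf // powRr1. Qed.

Lemma pospow_ge0 t p : (0 <= pospow t p)%E.
Proof.
rewrite /pospow; case: ifP => _; first by rewrite lee_fin powR_ge0.
by case: ifP => _ //; case: ifP.
Qed.

Lemma gt0_pospow t p : 0 < t -> pospow t p = (t `^ p)%:E.
Proof. by rewrite /pospow => ->. Qed.

Lemma ge0_pospow t p : 0 <= t -> 0 < p -> pospow t p = (t `^ p)%:E.
Proof.
rewrite le_eqVlt => /predU1P[<- p_gt0|/gt0_pospow//].
by rewrite /pospow ltxx p_gt0 powR0 ?gt_eqF.
Qed.

Lemma lt0_pospow_gt0 t p : p < 0 -> (0 < pospow t p)%E.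
Proof.
move=> p_lt0; rewrite /pospow; case: ifP => [t_gt0|_].
  by rewrite lte_fin powR_gt0.
by rewrite (ltNge 0 p) (ltW p_lt0) /= (lt_eqF p_lt0).
Qed.

Lemma gt0_pospow_leE p t v : 0 < p -> 0 <= v ->
  (pospow t p <= v%:E)%E = (t <= v `^ p^-1).
Proof.
move=> p_gt0 v_ge0; have [t_gt0|t_le0] := ltP 0 t.
  rewrite gt0_pospow // lee_fin.
  rewrite -[RHS](gt0_ler_powR2 p_gt0) ?nnegrE ?powR_ge0 ?(ltW t_gt0) //.
  by rewrite powRVK ?gt_eqF.
rewrite /pospow ltNge t_le0 p_gt0 /= lee_fin v_ge0.
by rewrite (le_trans t_le0) ?powR_ge0.
Qed.

Lemma lt0_pospow_leE p t v : p < 0 -> 0 < v ->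
  (pospow t p <= v%:E)%E = (v `^ p^-1 <= t).
Proof.
move=> p_lt0 v_gt0; have [t_gt0|t_le0] := ltP 0 t.
  rewrite gt0_pospow // lee_fin -[RHS](lt0_ler_powR2 p_lt0) ?posrE ?powR_gt0 //.
  by rewrite powRVK ?(lt_eqF p_lt0) ?(ltW v_gt0).
rewrite (leNgt (v `^ _)) (le_lt_trans t_le0) ?powR_gt0 //.
by rewrite /pospow (ltNge 0 t) t_le0 (ltNge 0 p) (ltW p_lt0) /= (lt_eqF p_lt0).
Qed.

Lemma score_shift_le0_iff be c v : be != 0 -> 0 <= v ->
  (c%:E + be%:E * (1 - pospow v be^-1) <= 0)%E <->
  (pospow (c / be + 1) be <= v%:E)%E.
Proof.
move=> be_neq0 v_ge0.
have shift w : c + be * (1 - w) = be * ((c / be + 1) - w) by field.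
have [be_lt0|be_gt0|be0] := ltgtP be 0; last by rewrite be0 eqxx in be_neq0.
  move: v_ge0; rewrite le_eqVlt => /predU1P[<-|v_gt0]; last first.
    rewrite gt0_pospow // -EFinB -EFinM -EFinD lee_fin shift.
    by rewrite nmulr_rle0 // subr_ge0 lt0_pospow_leE.
  have -> : pospow 0 be^-1 = +oo%E.
    by rewrite /pospow ltxx ltNge ltW ?invr_lt0 //= invr_eq0 (negbTE be_neq0).
  have -> : (1 - +oo = -oo :> \bar R)%E by [].
  rewrite mulrNy ltr0_sg // mulN1e /= addey // leye_eq.
  by rewrite leNgt lt0_pospow_gt0.
rewrite ge0_pospow ?invr_gt0 // -EFinB -EFinM -EFinD lee_fin shift.
by rewrite pmulr_rle0 // subr_le0 gt0_pospow_leE.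
Qed.

End PosPow.

Section Distributions.
Variables (R : realType) (Y : finType).
Implicit Types (P : Y -> \bar R) (p q : Y -> R).

Lemma exists_distr_ge (y0 : Y) p : (forall y, 0 <= p y) ->
  \sum_(y : Y) p y <= 1 -> exists q, is_distr q /\ forall y, p y <= q y.
Proof.
move=> p_ge0 sum_le1; set d := 1 - \sum_(y : Y) p y.
have d_ge0 : 0 <= d by rewrite subr_ge0.
exists (fun y => p y + (if y == y0 then d else 0)); split; first split.
- by move=> y; rewrite addr_ge0 //; case: ifP.
- by rewrite big_split /= -big_mkcond big_pred1_eq /d addrC subrK.
- by move=> y; rewrite lerDl; case: ifP.
Qed.

Lemma exists_distr_gee (y0 : Y) P : (forall y, (0 <= P y)%E) ->
  (\sum_(y : Y) P y <= 1)%E -> exists q, is_distr q /\ forall y, (P y <= (q y)%:E)%E.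
Proof.
move=> P_ge0 sum_le1.
have P_le1 y : (P y <= 1)%E.
  apply: le_trans sum_le1; rewrite (bigD1 y) //= leeDl //.
  by apply: sume_ge0 => z _.
have PE y : P y = (fine (P y))%:E.
  by rewrite fineK // ge0_fin_numE // (le_lt_trans (P_le1 y)) ?ltry.
have [||q [q_distr P_le_q]] := @exists_distr_ge y0 (fine \o P).
- by move=> y; rewrite -lee_fin -PE.
- by rewrite -lee_fin -sumEFin; under eq_bigr => y _ do rewrite /= -PE.
by exists q; split=> // y; rewrite PE lee_fin; exact: P_le_q.
Qed.

End Distributions.

Section Solutions.
Variables (R : realType) (m : nat).

Lemma is_solution_iff (feas1 feas2 : 'cV[R]_m -> 'cV[R]_m -> R -> Prop) a b :
  (forall mu eta nu, feas1 mu eta nu <-> feas2 mu eta nu) ->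
  forall mu eta nu, is_solution feas1 a b mu eta nu <-> is_solution feas2 a b mu eta nu.
Proof.
move=> feasE mu eta nu.
by split=> -[/feasE feas_mu min_mu]; split=> // mu' eta' nu' /feasE; exact: min_mu.
Qed.

End Solutions.

Section AlphaLoss.
Variables (R : realType) (X Y : finType) (m : nat) (alpha : R).
Hypotheses (alpha_gt0 : 0 < alpha) (alpha_neq1 : alpha != 1).
Local Notation beta := (beta_of alpha).

Lemma beta_of_neq0 : beta != 0.
Proof. by rewrite /beta_of mulf_neq0 ?invr_eq0 ?subr_eq0 // gt_eqF. Qed.

Lemma alpha_score_le0_iff c (q : Y -> R) y : 0 <= q y ->
  (c%:E + alpha_score alpha q y <= 0)%E <-> (pospow (c / beta + 1) beta <= (q y)%:E)%E.
Proof. exact: score_shift_le0_iff beta_of_neq0. Qed.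

Lemma in_Lset_alpha_scoreE (y0 : Y) (c : Y -> R) :
  in_Lset (alpha_score alpha) c <->
  (\sum_(y : Y) pospow (c y / beta + 1) beta <= 1)%E.
Proof.
split=> [[q [[q_ge0 sum_q] c_le]]|sum_le1].
  apply: (@le_trans _ _ (\sum_(y : Y) (q y)%:E)%E); last by rewrite sumEFin sum_q.
  by apply: lee_sum => y _; apply/alpha_score_le0_iff.
have [q [q_distr le_q]] := exists_distr_gee y0 (fun y => pospow_ge0 _ _) sum_le1.
by exists q; split=> // y; apply/alpha_score_le0_iff => //; case: q_distr.
Qed.

Lemma feas_ell_alpha_scoreE (y0 : Y) (Phi : X -> Y -> 'cV[R]_m) mu eta nu :
  feas_ell (alpha_score alpha) Phi mu eta nu <-> feas_alpha alpha Phi mu eta nu.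
Proof.
by split=> -[inL box]; split=> // x; apply/(in_Lset_alpha_scoreE y0); exact: inL.
Qed.

Lemma alpha_loss_le0_iff (h : X -> Y -> R) (c : X -> Y -> R) : is_rule h ->
  (forall x y, (alpha_loss alpha h x y + (c x y)%:E <= 0)%E) <->
  (forall x y, (pospow (c x y / beta + 1) beta <= (h x y)%:E)%E).
Proof.
move=> h_rule; split=> c_le x y.
  by apply/alpha_score_le0_iff; [case: (h_rule x)|rewrite addeC; exact: c_le].
by rewrite addeC; apply/alpha_score_le0_iff; [case: (h_rule x)|exact: c_le].
Qed.

End AlphaLoss.

Theorem corollary3 (R : realType) (X Y : finType) (m : nat)
  (x0 : X) (y0 : Y) (Phi : X -> Y -> 'cV[R]_m) (alpha : R)
  (halpha : 0 < alpha) (halpha1 : alpha != 1) (a b : 'cV[R]_m) :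
  (* P_{ell_alpha}^{a,b} and P_alpha^{a,b}: same objective, same feasible set *)
  (forall mu eta nu,
     feas_ell (alpha_score alpha) Phi mu eta nu <-> feas_alpha alpha Phi mu eta nu) /\
  (* hence the same solutions *)
  (forall mu eta nu,
     is_solution (feas_ell (alpha_score alpha) Phi) a b mu eta nu <->
     is_solution (feas_alpha alpha Phi) a b mu eta nu) /\
  (* the MRC condition for a solution of P_alpha^{a,b} *)
  (forall mus etas nus, is_solution (feas_alpha alpha Phi) a b mus etas nus ->
     forall h : X -> Y -> R, is_rule h ->
       ((forall x y,
           (alpha_loss alpha h x y + (dotv (Phi x y) mus + nus)%:E <= 0)%E) <->
        (forall x y,
           (pospow ((dotv (Phi x y) mus + nus) / beta_of alpha + 1) (beta_of alpha)
             <= (h x y)%:E)%E))).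
Proof.
have feasE := feas_ell_alpha_scoreE halpha halpha1 y0 Phi.
split; first exact: feasE.
split; first exact: is_solution_iff.
by move=> mus etas nus _ h h_rule; exact: alpha_loss_le0_iff.
Qed.
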